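(* Let $G$ be a simple undirected graph containing the edge $\{v_1,v_2\}$, and let $G'$ be the graph obtained from $G$ by removing the edge $\{v_1,v_2\}$ (same vertex set). If $s\in(-\infty,0]\cup[1,+\infty)$, then $\rho(M_G(s))\geq \rho(M_{G'}(s))$.
   Context: For a simple undirected graph $G$ on $n$ vertices with adjacency matrix $A$, diagonal degree matrix $D$ and $n\times n$ identity matrix $I$, and a real parameter $s$, the deformed Laplacian matrix of $G$ is $M_G(s)=I-sA+s^2(D-I)$. For a real symmetric matrix $B$, $\rho(B)$ denotes its spectral radius, here meaning its largest eigenvalue $\sup_{|x|=1}\langle x,Bx\rangle$. *)

From HB Require Import structures.
From mathcomp Require Import all_boot all_order all_algebra.
From mathcomp Require Import boolp classical_sets reals.
Set Implicit Arguments. Unset Strict Implicit. Unset Printing Implicit Defensive.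
Import Order.TTheory GRing.Theory Num.Theory.
Local Open Scope ring_scope.
Local Open Scope classical_set_scope.

Definition simple_graph (n : nat) (e : rel 'I_n) : Prop :=
  symmetric e /\ irreflexive e.

Definition adjmx (R : realType) (n : nat) (e : rel 'I_n) : 'M[R]_n :=
  \matrix_(i, j) (e i j)%:R.

Definition degmx (R : realType) (n : nat) (e : rel 'I_n) : 'M[R]_n :=
  \matrix_(i, j) ((i == j)%:R * (#|[set k | e i k]|)%:R).

Definition deformed_laplacian (R : realType) (n : nat) (e : rel 'I_n) (s : R)
  : 'M[R]_n :=
  1%:M - s *: adjmx R e + (s ^+ 2) *: (degmx R e - 1%:M).

(* largest eigenvalue of a real symmetric matrix: sup_{|x|=1} <x, B x> *)
Definition rho (R : realType) (n : nat) (B : 'M[R]_n) : R :=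
  sup [set (x *m B *m x^T) 0 0 | x in [set x : 'rV[R]_n | (x *m x^T) 0 0 = 1]].

Definition remove_edge (n : nat) (e : rel 'I_n) (v1 v2 : 'I_n) : rel 'I_n :=
  fun x y => e x y && ~~ (((x == v1) && (y == v2)) || ((x == v2) && (y == v1))).

From mathcomp Require Import all_boot all_order all_algebra.
From mathcomp Require Import boolp classical_sets reals.
From mathcomp Require Import ring lra.
Set Implicit Arguments.
Unset Strict Implicit.
Unset Printing Implicit Defensive.

Import Order.TTheory GRing.Theory Num.Theory.
Local Open Scope ring_scope.

(* Deleting the edge v1v2 subtracts from M_G(s) the matrix
   s^2 (E_11 + E_22) - s (E_12 + E_21), whose quadratic form
   s^2 (a^2 + b^2) - 2sab (a = x_v1, b = x_v2) is nonnegative for every x when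
   s >= 1, and for entrywise nonnegative x when s <= 0.  For s >= 1 the values
   of x^T M_G'(s) x are therefore pointwise below those of M_G(s).  For s <= 0
   the off-diagonal entries -s A' of M_G'(s) are nonnegative, so replacing a
   unit vector x by |x| can only increase x^T M_G'(s) x, and then the first
   argument applies to |x|. *)

Section QuadraticForm.
Variables (R : comPzRingType) (n : nat).
Implicit Types (B C : 'M[R]_n) (x : 'rV[R]_n).

Definition qform B x : R := (x *m B *m x^T) 0 0.

Lemma qformE B x : qform B x = \sum_i \sum_j x 0 i * B i j * x 0 j.
Proof.
rewrite /qform mxE exchange_big; apply: eq_bigr => j _.
by rewrite !mxE big_distrl.
Qed.

Lemma qformD B C x : qform (B + C) x = qform B x + qform C x.
Proof. by rewrite /qform mulmxDr mulmxDl mxE. Qed.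

Lemma qformB B C x : qform (B - C) x = qform B x - qform C x.
Proof. by rewrite /qform mulmxBr mulmxBl !mxE. Qed.

Lemma qformZ a B x : qform (a *: B) x = a * qform B x.
Proof. by rewrite /qform -scalemxAr -scalemxAl mxE. Qed.

Lemma qform_delta i j x : qform (delta_mx i j) x = x 0 i * x 0 j.
Proof.
rewrite qformE (bigD1 i) //= [X in _ + X]big1 => [|k /negbTE nki]; last first.
  by apply: big1 => l _; rewrite mxE nki mulr0 mul0r.
rewrite addr0 (bigD1 j) //= [X in _ + X]big1 => [|l /negbTE nlj].
  by rewrite mxE !eqxx mulr1 addr0.
by rewrite mxE nlj andbF mulr0 mul0r.
Qed.

Lemma sqnorm_rowE x : (x *m x^T) 0 0 = \sum_i x 0 i ^+ 2.
Proof. by rewrite mxE; apply: eq_bigr => i _; rewrite mxE expr2. Qed.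

End QuadraticForm.

Section QuadraticFormOrder.
Variables (R : realDomainType) (n : nat).
Implicit Types (B : 'M[R]_n) (x : 'rV[R]_n).

Lemma sqnorm_row_normr x :
  (map_mx Num.norm x *m (map_mx Num.norm x)^T) 0 0 = (x *m x^T) 0 0.
Proof.
by rewrite !sqnorm_rowE; apply: eq_bigr => i _; rewrite mxE real_normK ?num_real.
Qed.

Lemma qform_le_normr B x : (forall i j, i != j -> 0 <= B i j) ->
  qform B x <= qform B (map_mx Num.norm x).
Proof.
move=> B_offdiag_ge0; rewrite !qformE; apply: ler_sum => i _; apply: ler_sum => j _.
rewrite !mxE mulrAC [leRHS]mulrAC -normrM.
have [<-|nij] := eqVneq i j; first by rewrite -expr2 ger0_norm ?sqr_ge0.
by apply: ler_wpM2r; [exact: B_offdiag_ge0 | exact: ler_norm].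
Qed.

Lemma unit_row_coord_le1 x : (x *m x^T) 0 0 = 1 -> forall i, `|x 0 i| <= 1.
Proof.
rewrite sqnorm_rowE => x_unit i; rewrite -(expr_le1 (ltn0Sn 1)) ?normr_ge0 //.
rewrite real_normK ?num_real // -x_unit (bigD1 i) //= lerDl.
by apply: sumr_ge0 => k _; exact: sqr_ge0.
Qed.

Lemma qform_le_sum_normr B x : (x *m x^T) 0 0 = 1 ->
  qform B x <= \sum_i \sum_j `|B i j|.
Proof.
move=> x_unit; rewrite qformE; apply: ler_sum => i _; apply: ler_sum => j _.
apply: le_trans (ler_norm _) _; rewrite !normrM.
have xi_le1 := unit_row_coord_le1 x_unit i.
have xj_le1 := unit_row_coord_le1 x_unit j.
by rewrite mulrAC -[leRHS]mul1r ler_wpM2r // mulr_ile1.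
Qed.

End QuadraticFormOrder.

Section SpectralRadius.
Local Open Scope classical_set_scope.
Variables (R : realType) (n : nat).
Implicit Types (B : 'M[R]_n) (x : 'rV[R]_n).

Definition unit_sphere : set 'rV[R]_n := [set x | (x *m x^T) 0 0 = 1].

Lemma rhoE B : rho B = sup [set qform B x | x in unit_sphere].
Proof. by []. Qed.

Lemma has_sup_qform_sphere B x0 : unit_sphere x0 ->
  has_sup [set qform B x | x in unit_sphere].
Proof.
move=> x0_unit; split; first by exists (qform B x0), x0.
by exists (\sum_i \sum_j `|B i j|) => _ [x x_unit <-]; exact: qform_le_sum_normr.
Qed.

Lemma rho_le B B' :
  (forall x, unit_sphere x -> exists2 y, unit_sphere y & qform B' x <= qform B y) ->
  rho B' <= rho B.
Proof.
move=> dominated; rewrite !rhoE.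
have [[x0 x0_unit]|sphere0] := pselect (exists x, unit_sphere x); last first.
  suff empty : forall C, [set qform C x | x in unit_sphere] = set0.
    by rewrite !empty.
  by move=> C; apply/seteqP; split => // r [x x_unit _]; apply: sphere0; exists x.
apply: ge_sup; first by exists (qform B' x0), x0.
move=> _ [x x_unit <-]; have [y y_unit le_xy] := dominated x x_unit.
apply: le_trans le_xy _; apply: sup_upper_bound; last by exists y.
exact: has_sup_qform_sphere x0_unit.
Qed.

End SpectralRadius.

Section EdgePerturbation.
Variables (R : realDomainType) (n : nat).
Implicit Types (s : R) (x : 'rV[R]_n).

Definition edge_mx s (i j : 'I_n) : 'M[R]_n :=
  s ^+ 2 *: (delta_mx i i + delta_mx j j) - s *: (delta_mx i j + delta_mx j i).

Lemma qform_edge_mx s i j x :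
  qform (edge_mx s i j) x = s ^+ 2 * (x 0 i ^+ 2 + x 0 j ^+ 2) - 2 * s * (x 0 i * x 0 j).
Proof. by rewrite qformB !qformZ !qformD !qform_delta; ring. Qed.

(* [s^2 (a^2 + b^2) - 2sab = (sa - b)^2 + (s^2 - 1) b^2] *)
Lemma qform_edge_mx_ge0 s i j x : 1 <= s -> 0 <= qform (edge_mx s i j) x.
Proof.
move=> s_ge1; rewrite qform_edge_mx.
have s2_ge1 := exprn_ege1 2 s_ge1.
have : 0 <= (s ^+ 2 - 1) * x 0 j ^+ 2 by rewrite mulr_ge0 ?subr_ge0 ?sqr_ge0.
have := sqr_ge0 (s * x 0 i - x 0 j); nra.
Qed.

Lemma qform_edge_mx_ge0_nonneg s i j x :
  s <= 0 -> 0 <= x 0 i -> 0 <= x 0 j -> 0 <= qform (edge_mx s i j) x.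
Proof.
move=> s_le0 xi_ge0 xj_ge0; rewrite qform_edge_mx.
have : 0 <= s ^+ 2 * (x 0 i ^+ 2 + x 0 j ^+ 2) by rewrite mulr_ge0 ?addr_ge0 ?sqr_ge0.
have : 0 <= - s * (x 0 i * x 0 j) by rewrite !mulr_ge0 ?oppr_ge0.
lra.
Qed.

End EdgePerturbation.

Lemma card_neighbours n (g : rel 'I_n) i :
  #|[set k | g i k]%classic| = (\sum_k g i k)%N.
Proof.
rewrite -sum1_card big_mkcond /=; apply: eq_bigr => k _.
have -> : (k \in [set k | g i k]%classic) = g i k.
  by apply/idP/idP => [/set_mem|/mem_set].
by case: (g i k).
Qed.

Lemma deformed_laplacian_offdiag_ge0 {R : realType} {n} (g : rel 'I_n) (s : R) :
  s <= 0 -> forall i j, i != j -> 0 <= deformed_laplacian g s i j.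
Proof.
move=> s_le0 i j /negbTE nij; rewrite !mxE nij !mul0r subr0 mulr0 addr0 sub0r.
by rewrite -mulNr mulr_ge0 ?oppr_ge0.
Qed.

Section RemoveEdge.
Variables (R : realType) (n : nat) (e : rel 'I_n) (v1 v2 : 'I_n).
Hypotheses (e_simple : simple_graph e) (e_v1v2 : e v1 v2).
Let e' := remove_edge e v1 v2.

Lemma adj_remove_edge i j :
  (e i j = e' i j + ((i == v1) && (j == v2)) + ((i == v2) && (j == v1)) :> nat)%N.
Proof.
have [e_sym e_irr] := e_simple.
have v12 : v1 != v2 by apply: contraPneq e_v1v2 => ->; rewrite e_irr.
have fwd : (i == v1) && (j == v2) ==> e i j by apply/implyP => /andP[/eqP-> /eqP->].
have bwd : (i == v2) && (j == v1) ==> e i j.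
  by apply/implyP => /andP[/eqP-> /eqP->]; rewrite e_sym.
have not_both : ~~ [&& i == v1, j == v2, i == v2 & j == v1].
  by apply: contra v12 => /and4P[/eqP<- _ /eqP<- _].
rewrite /e' /remove_edge; move: fwd bwd not_both.
by case: (e i j) (i == v1) (j == v2) (i == v2) (j == v1) => [] [] [] [] [].
Qed.

Lemma adjmx_remove_edge :
  adjmx R e = adjmx R e' + delta_mx v1 v2 + delta_mx v2 v1.
Proof. by apply/matrixP => i j; rewrite !mxE adj_remove_edge !natrD. Qed.

Lemma degree_remove_edge i :
  (\sum_k e i k = \sum_k e' i k + (i == v1) + (i == v2))%N.
Proof.
have sum_pair v w : (\sum_k ((i == v) && (k == w)) = (i == v))%N.
  rewrite (bigD1 w) //= big1 ?eqxx ?andbT ?addn0 // => k /negbTE nkw.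
  by rewrite nkw andbF.
by rewrite (eq_bigr _ (fun k _ => adj_remove_edge i k)) !big_split /= !sum_pair.
Qed.

Lemma degmx_remove_edge :
  degmx R e = degmx R e' + delta_mx v1 v1 + delta_mx v2 v2.
Proof.
apply/matrixP => i j; rewrite !mxE !card_neighbours degree_remove_edge.
have [<-|nij] := eqVneq i j; first by rewrite !andbb !natrD !mul1r.
have off_diag v : (i == v) && (j == v) = false.
  by apply: contraNF nij => /andP[/eqP-> /eqP->].
by rewrite !mul0r add0r !off_diag addr0.
Qed.

Lemma deformed_laplacian_remove_edge (s : R) :
  deformed_laplacian e' s = deformed_laplacian e s - edge_mx s v1 v2.
Proof.
rewrite /deformed_laplacian adjmx_remove_edge degmx_remove_edge /edge_mx.
by apply/matrixP => i j; rewrite !mxE; ring.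
Qed.

End RemoveEdge.

Theorem theorem3p4 (R : realType) (n : nat) (e : rel 'I_n) (v1 v2 : 'I_n)
  (s : R) :
  simple_graph e -> e v1 v2 -> (s <= 0 \/ 1 <= s) ->
  rho (deformed_laplacian e s) >=
  rho (deformed_laplacian (remove_edge e v1 v2) s).
Proof.
move=> e_simple e_v1v2 [s_le0|s_ge1]; apply: rho_le => x x_unit.
- exists (map_mx Num.norm x); first by rewrite /unit_sphere /= sqnorm_row_normr.
  apply: le_trans (qform_le_normr _ (deformed_laplacian_offdiag_ge0 _ s_le0)) _.
  rewrite deformed_laplacian_remove_edge // qformB gerBl.
  by rewrite qform_edge_mx_ge0_nonneg // mxE normr_ge0.
- exists x => //.
  by rewrite deformed_laplacian_remove_edge // qformB gerBl qform_edge_mx_ge0.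
Qed.
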